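(* Let $m \ge 3$ and $n \ge 2$ be integers, and let $k \ge 1$ be the integer with $k^2 \le n < (k+1)^2$, so that $n = k^2 + h$ with $0 \le h \le 2k$. Then $\mathrm{sg_e}(P_n \,\square\, K_m) = mk$ if $h = 0$; $\mathrm{sg_e}(P_n \,\square\, K_m) = mk + (m-1)$ if $1 \le h \le k$; and $\mathrm{sg_e}(P_n \,\square\, K_m) = mk + m$ if $k+1 \le h \le 2k$. In particular, $\mathrm{sg_e}(P_2 \,\square\, K_m) = 2m-1$ for $m\ge 3$.
   Context: All graphs are finite, simple and connected. $P_n$ is the path on $n$ vertices and $K_m$ the complete graph on $m$ vertices. The Cartesian product $G \,\square\, H$ has vertex set $V(G)\times V(H)$, with $(g,h)$ adjacent to $(g',h')$ iff either $g=g'$ and $hh' \in E(H)$, or $h=h'$ and $gg' \in E(G)$. A set $S \subseteq V(G)$ is a strong edge geodetic set of $G$ if one can assign to every unordered pair $\{u,v\}$ of distinct vertices of $S$ either one shortest $u,v$-path $P_{uv}$ in $G$ or no path, in such a way that every edge of $G$ lies on at least one of the assigned paths. The strong edge geodetic number $\mathrm{sg_e}(G)$ is the minimum cardinality of a strong edge geodetic set of $G$. *)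

From mathcomp Require Import all_boot all_order.
Set Implicit Arguments. Unset Strict Implicit. Unset Printing Implicit Defensive.

(* A simple graph is a symmetric irreflexive relation [e] on a finite type. *)

Definition path_graph (n : nat) : rel 'I_n :=
  fun i j => (i.+1 == j :> nat) || (j.+1 == i :> nat).

Arguments path_graph n : clear implicits.

Definition complete_graph (m : nat) : rel 'I_m := fun i j => i != j.

Arguments complete_graph m : clear implicits.

Definition cart_prod (T1 T2 : finType) (e1 : rel T1) (e2 : rel T2)
  : rel (T1 * T2) :=
  fun x y => ((x.1 == y.1) && e2 x.2 y.2) || ((x.2 == y.2) && e1 x.1 y.1).

(* A u,v-walk is represented by the vertex sequence u :: p, where
   [path e u p] and [last u p = v]; its length is [size p]. *)
Definition is_walk (T : finType) (e : rel T) (u v : T) (p : seq T) : Prop :=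
  path e u p /\ last u p = v.

Definition is_shortest_path (T : finType) (e : rel T) (u v : T) (p : seq T)
  : Prop :=
  is_walk e u v p /\ forall q, is_walk e u v q -> size p <= size q.

Definition edge_on (T : finType) (u : T) (p : seq T) (x y : T) : bool :=
  ((x, y) \in zip (u :: p) p) || ((y, x) \in zip (u :: p) p).

(* Strong edge geodetic set: an assignment, to every unordered pair {u,v}
   of distinct vertices of S (represented by the ordered pair with
   enum_rank u < enum_rank v), of either one shortest u,v-path or no path,
   such that every edge of G lies on some assigned path. *)
Definition strong_edge_geodetic (T : finType) (e : rel T) (S : {set T})
  : Prop :=
  exists f : T -> T -> option (seq T),
    (forall u v p, u \in S -> v \in S -> (enum_rank u < enum_rank v)%N ->
        f u v = Some p -> is_shortest_path e u v p) /\
    (forall x y, e x y ->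
       exists u v p, [/\ u \in S, v \in S, (enum_rank u < enum_rank v)%N,
                         f u v = Some p & edge_on u p x y]).

Definition sge_number (T : finType) (e : rel T) (N : nat) : Prop :=
  (exists S : {set T}, strong_edge_geodetic e S /\ #|S| = N) /\
  (forall S : {set T}, strong_edge_geodetic e S -> N <= #|S|).

(* The vertices of P_n □ K_m form n rows {t} × K_m and m layers P_n × {a}.  A
   geodesic contains at most one row edge, and a row edge between the layers a and b
   lies only on geodesics joining a vertex of layer a to one of layer b.  So if a
   strong edge geodetic set meets the layers in s_a vertices, the n row edges between
   a and b need s_a * s_b >= n pairs; if c is the smallest layer, every other layer has
   at least max(s_c, n / s_c) vertices, and minimising s_c + (m - 1) * max(s_c, n / s_c)
   gives the lower bound.  For the upper bound, every layer carries s stations about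
   sqrt n apart, the first and last vertex of the path among them: the s^2 ordered
   pairs of stations can be matched injectively with rows lying between the two
   stations of the pair, and the geodesic from (x, a) to (y, b) changing layer at the
   matched row covers that row edge, while the geodesic between the end stations of a
   layer covers its layer edges.  When 1 <= h <= k one layer has only k stations, its
   rows above k^2 being routed through its stations and the last station of the other
   layer. *)

From mathcomp Require Import all_boot all_order.
From mathcomp Require Import zify.
Set Implicit Arguments. Unset Strict Implicit. Unset Printing Implicit Defensive.

Definition sge_value (m k h : nat) : nat :=
  if h == 0 then m * k else if h <= k then m * k + (m - 1) else m * k + m.

(* When [c <= k], [c * x >= k ^ 2 + h] forces [x >= 2k - c + [h > 0] + [h > k]]
   because [c * (2k - c) = k ^ 2 - (k - c) ^ 2]. *)
Definition partner_lb (k h c : nat) : nat :=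
  if k < c then k.+1 else (k - c) + k + (0 < h) + (k < h).

Lemma partner_lbP k h c x : 0 < k -> h <= 2 * k -> c <= x ->
  k ^ 2 + h <= c * x -> partner_lb k h c <= x.
Proof.
move=> k_gt0 h_le c_le_x cover; rewrite /partner_lb; case: ltnP => kc; first by lia.
rewrite leqNgt; apply/negP => x_lt.
have : c * x <= c * (k - c + k + (0 < h) + (k < h)).-1 by rewrite leq_mul2l -ltnS; lia.
by case: (posnP h) => h0; case: (ltnP k h) => hk /=; nia.
Qed.

Lemma sge_value_le m k h c : 3 <= m -> 0 < k -> h <= 2 * k ->
  sge_value m k h <= c + (m - 1) * partner_lb k h c.
Proof.
move=> m_ge3 k_gt0 h_le; rewrite /sge_value /partner_lb.
by case: (posnP h) => h0; case: (leqP h k) => hk; case: (ltnP k c) => kc /=; nia.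
Qed.

Definition between (t i j : nat) := minn i j <= t <= maxn i j.

Lemma between_sym t i j : between t i j = between t j i.
Proof. by rewrite /between minnC maxnC. Qed.

(* The offset [r <= s] of a row from the station [p] below it is matched with the
   ordered station pair [(p, p)], [(p, p + r)] or [(p + 1, r - (s - p))]; a pair
   [(i, j)] arises only from the segment [i] if [i <= j], and [i - 1] if [j < i]. *)
Definition pair_code (s p r : nat) : nat * nat :=
  if r == 0 then (p, p) else if r <= s.-1 - p then (p, p + r) else (p.+1, r - (s - p)).

Lemma pair_code_inj s p1 r1 p2 r2 : p1 < s -> p2 < s ->
  (p1 = s.-1 -> r1 = 0) -> (p2 = s.-1 -> r2 = 0) -> r1 <= s -> r2 <= s ->
  pair_code s p1 r1 = pair_code s p2 r2 -> p1 = p2 /\ r1 = r2.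
Proof.
move=> p1_lt p2_lt last1 last2 r1_le r2_le; rewrite /pair_code.
case: (r1 =P 0) => h1; case: (r2 =P 0) => h2;
case: (leqP r1 (s.-1 - p1)) => h3; case: (leqP r2 (s.-1 - p2)) => h4;
move=> [e1 e2]; try lia.
all: have := last1; have := last2; lia.
Qed.

(* [s] stations on the path [0 .. N-1]: the first [s - 1] of them [d] apart starting
   at [0], the last one at [N - 1], consecutive stations at most [s + 1] apart as
   [pair_code] requires. *)
Record stations (s d N : nat) : Prop := Stations {
  stations_s_gt0 : 0 < s;
  stations_d_gt0 : 0 < d;
  stations_d_le : d <= s.+1;
  stations_N_gt0 : 0 < N;
  stations_last_le : N.-1 <= s.-1 * d;
  stations_last_gap : 2 <= s -> (s - 2) * d < N.-1 <= (s - 2) * d + s.+1 }.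

Section Stations.
Variables s d N : nat.
Hypothesis st_ok : stations s d N.

Definition station p := if p < s.-1 then p * d else N.-1.

Definition segment t := if t == N.-1 then s.-1 else t %/ d.

Definition cross_index t := pair_code s (segment t) (t - station (segment t)).

Definition cross t := (station (cross_index t).1, station (cross_index t).2).

Definition station_seq := [seq station p | p <- iota 0 s].

Lemma station0 : station 0 = 0.
Proof. by case: st_ok => s_gt0 _ _ _ last_le _; rewrite /station; case: ifP; lia. Qed.

Lemma station_last : station s.-1 = N.-1.
Proof. by rewrite /station ltnn. Qed.

Lemma station_leq_last p : station p <= N.-1.
Proof.
case: st_ok => _ _ _ _ _ gap; rewrite /station; case: ltnP => // p_lt.
have /andP [lt_last _] := gap ltac:(lia).
have : p * d <= (s - 2) * d by rewrite leq_mul2r; lia.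
lia.
Qed.

Lemma station_mono p q : p <= q -> q < s -> station p + (q - p) <= station q.
Proof.
case: st_ok => _ d_gt0 _ _ _ gap pq q_lt; rewrite /station.
case: (ltnP q s.-1) => q_last; case: (ltnP p s.-1) => p_last; try lia.
- have : (q - p) * d + p * d <= q * d by rewrite -mulnDl leq_mul2r; lia.
  have : q - p <= (q - p) * d by rewrite leq_pmulr.
  lia.
- have /andP [lt_last _] := gap ltac:(lia).
  have : (s - 2 - p) * d + p * d <= (s - 2) * d by rewrite -mulnDl leq_mul2r; lia.
  have : s - 2 - p <= (s - 2 - p) * d by rewrite leq_pmulr.
  lia.
Qed.

Lemma station_le p q : p <= q -> q < s -> station p <= station q.
Proof. by move=> pq q_lt; have := station_mono pq q_lt; lia. Qed.

Lemma station_inj p q : p < s -> q < s -> station p = station q -> p = q.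
Proof.
move=> p_lt q_lt eq_pq; case: (ltngtP p q) => // [pq|qp].
  by have := station_mono (ltnW pq) q_lt; lia.
by have := station_mono (ltnW qp) p_lt; lia.
Qed.

Lemma segmentP t : t < N ->
  [/\ segment t < s, station (segment t) <= t,
      segment t = s.-1 -> t = station (segment t),
      t - station (segment t) <= s &
      segment t < s.-1 -> t < station (segment t).+1].
Proof.
case: st_ok => s_gt0 d_gt0 d_le N_gt0 last_le gap t_lt; rewrite /segment.
case: eqP => t_last; first by rewrite station_last; split; lia.
have seg_lt : t %/ d < s.-1 by rewrite ltn_divLR; lia.
have seg_def : station (t %/ d) = t %/ d * d by rewrite /station seg_lt.
have t_lt_next : t < station (t %/ d).+1.
  by rewrite /station; case: ifP => _; [exact: ltn_ceil | lia].
split=> //; [lia | by rewrite seg_def leq_divM | lia |].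
rewrite seg_def; case: (ltnP (t %/ d).+1 s.-1) => next.
  by have := ltn_ceil t d_gt0; lia.
have /andP [_ gap_le] := gap ltac:(lia).
have -> : t %/ d = s - 2 by lia.
lia.
Qed.

Lemma cross_indexP t : t < N ->
  [/\ (cross_index t).1 < s, (cross_index t).2 < s &
      between t (station (cross_index t).1) (station (cross_index t).2)].
Proof.
move=> t_lt; have [seg_lt seg_le seg_last seg_off seg_next] := segmentP t_lt.
rewrite /cross_index /pair_code /between.
set p := segment t in seg_lt seg_le seg_last seg_off seg_next *; clearbody p.
case: eqP => r0 /=; first by rewrite minnn maxnn; split; lia.
case: (leqP (t - station p) (s.-1 - p)) => r_le /=.
  have := station_mono (leq_addr (t - station p) p) ltac:(lia).
  rewrite addKn => mono.
  have le : station p <= station (p + (t - station p)) by lia.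
  by rewrite (minn_idPl le) (maxn_idPr le); split; lia.
have p_last : p < s.-1 by case: (ltnP p s.-1) => //; lia.
have j_le : t - station p - (s - p) <= p by lia.
have le : station (t - station p - (s - p)) <= station p.+1 by apply: station_le; lia.
rewrite (minn_idPr le) (maxn_idPl le); split; try lia.
by have := station_le j_le ltac:(lia); have := seg_next p_last; lia.
Qed.

Lemma cross_index_inj t1 t2 : t1 < N -> t2 < N ->
  cross_index t1 = cross_index t2 -> t1 = t2.
Proof.
move=> t1_lt t2_lt; rewrite /cross_index.
have [a1 a2 a3 a4 _] := segmentP t1_lt; have [b1 b2 b3 b4 _] := segmentP t2_lt.
move=> eq_code; have [||e1 e2] := pair_code_inj a1 b1 _ _ a4 b4 eq_code.
- by move=> e; have := a3 e; lia.
- by move=> e; have := b3 e; lia.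
by rewrite e1 in e2 a2; lia.
Qed.

Lemma crossP t : t < N ->
  [/\ (cross t).1 \in station_seq, (cross t).2 \in station_seq &
      between t (cross t).1 (cross t).2].
Proof.
move=> t_lt; have [i_lt j_lt btw] := cross_indexP t_lt.
by split=> //; apply: map_f; rewrite mem_iota; lia.
Qed.

Lemma cross_inj t1 t2 : t1 < N -> t2 < N -> cross t1 = cross t2 -> t1 = t2.
Proof.
move=> t1_lt t2_lt [e1 e2]; apply: cross_index_inj => //.
have [a1 a2 _] := cross_indexP t1_lt; have [b1 b2 _] := cross_indexP t2_lt.
move: e1 e2 a1 a2 b1 b2; case: (cross_index t1) (cross_index t2) => [i1 j1] [i2 j2] /=.
by move=> e1 e2 a1 a2 b1 b2; rewrite (station_inj a1 b1 e1) (station_inj a2 b2 e2).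
Qed.

Lemma mem_station_seq i : i < s -> station i \in station_seq.
Proof. by move=> i_lt; apply: map_f; rewrite mem_iota. Qed.

Lemma station_seqP x : x \in station_seq -> x < N.
Proof.
case/mapP=> p _ ->; have := station_leq_last p.
by case: st_ok => _ _ _ N_gt0 _ _; lia.
Qed.

Lemma station_seq_uniq : uniq station_seq.
Proof.
rewrite map_inj_in_uniq ?iota_uniq // => p q; rewrite !mem_iota; exact: station_inj.
Qed.

Lemma size_station_seq : size station_seq = s.
Proof. by rewrite size_map size_iota. Qed.

End Stations.

Lemma stations_square k : 0 < k -> stations k k.+1 (k ^ 2).
Proof. by move=> k_gt0; split=> [||||| s_ge2]; try apply/andP; try split; nia. Qed.

Lemma stations_low k n : k ^ 2 < n <= k ^ 2 + k -> stations k.+1 k.+1 n.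
Proof. by move=> n_bd; split=> [||||| s_ge2]; try apply/andP; try split; nia. Qed.

Lemma stations_high k n : k ^ 2 + k < n <= k ^ 2 + 2 * k -> stations k.+1 k.+2 n.
Proof. by move=> n_bd; split=> [||||| s_ge2]; try apply/andP; try split; nia. Qed.

Lemma station_exact s d N i : N.-1 = s.-1 * d -> i < s -> station s d N i = i * d.
Proof.
by rewrite /station => last_eq i_lt; case: ltnP => // i_last; rewrite last_eq; congr muln; lia.
Qed.

Section MixedRoute.
Variables k n : nat.
Hypotheses (k_gt0 : 0 < k) (n_bd : k ^ 2 < n <= k ^ 2 + k).

Let sq_last : (k ^ 2).-1 = k.-1 * k.+1. Proof. by nia. Qed.

Lemma station_square_low p : p < k -> station k k.+1 (k ^ 2) p = station k.+1 k.+1 n p.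
Proof. by move=> p_lt; rewrite station_exact // /station /= p_lt. Qed.

Lemma station_seq_square_low : {subset station_seq k k.+1 (k ^ 2) <= station_seq k.+1 k.+1 n}.
Proof.
move=> x /mapP [p]; rewrite mem_iota => p_lt ->.
by rewrite station_square_low; [apply: mem_station_seq | ]; lia.
Qed.

(* Routes for the layer with [k] stations only: rows below [k ^ 2] as in the square
   case, and row [k ^ 2 + r] through its [r]-th station and the last station of the
   other layer. *)
Definition mixed_route (t : nat) : nat * nat :=
  if t < k ^ 2 then cross k k.+1 (k ^ 2) t else ((t - k ^ 2) * k.+1, n.-1).

Lemma mixed_routeP t : t < n ->
  [/\ (mixed_route t).1 \in station_seq k k.+1 (k ^ 2),
      (mixed_route t).2 \in station_seq k.+1 k.+1 n &
      between t (mixed_route t).1 (mixed_route t).2].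
Proof.
have st_sq := stations_square k_gt0; rewrite /mixed_route => t_lt; case: ifP => t_sq.
  by have [x_in y_in btw] := crossP st_sq t_sq; split=> //; apply: station_seq_square_low.
have r_lt : t - k ^ 2 < k by lia.
split=> /=.
- by rewrite -(station_exact sq_last r_lt); apply: mem_station_seq.
- by rewrite -(station_last k.+1 k.+1 n); apply: mem_station_seq.
have : (t - k ^ 2) * k.+1 <= k.-1 * k.+1 by rewrite leq_mul2r; lia.
by rewrite /between; lia.
Qed.

Lemma mixed_route_inj t1 t2 : t1 < n -> t2 < n -> mixed_route t1 = mixed_route t2 -> t1 = t2.
Proof.
have st_sq := stations_square k_gt0; move=> t1_lt t2_lt; rewrite /mixed_route.
case: ifP => t1_sq; case: ifP => t2_sq.
- exact: cross_inj.
- case: (crossP st_sq t1_sq) => _ /(station_seqP st_sq) y_lt _ /(congr1 snd).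
  by rewrite [RHS]/=; lia.
- case: (crossP st_sq t2_sq) => _ /(station_seqP st_sq) y_lt _ /(congr1 snd).
  by rewrite [LHS]/=; lia.
by case=> /eqP; rewrite eqn_mul2r /= => /eqP; lia.
Qed.

End MixedRoute.

Definition distn (i j : nat) := (i - j) + (j - i).

Lemma mem_zip_split (T : eqType) (u x y : T) p : (x, y) \in zip (u :: p) p ->
  exists p1 p2, p = p1 ++ y :: p2 /\ last u p1 = x.
Proof.
elim: p u => [|w p IH] u //=; rewrite in_cons => /orP [/eqP [-> ->]|/IH [p1 [p2 [-> <-]]]].
  by exists [::], p.
by exists (w :: p1), p2.
Qed.

Lemma count_ge2 (T : eqType) (P : pred T) (s : seq T) a b :
  a \in s -> b \in s -> a != b -> P a -> P b -> 1 < count P s.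
Proof.
move=> a_in b_in ab Pa Pb; rewrite -size_filter.
have : a \in filter P s by rewrite mem_filter Pa a_in.
have : b \in filter P s by rewrite mem_filter Pb b_in.
case: (filter P s) => [|z [|z' s']] //=.
by rewrite !inE => /eqP eb /eqP ea; rewrite ea eb eqxx in ab.
Qed.

Lemma edge_onC (T : finType) (u x y : T) p : edge_on u p x y = edge_on u p y x.
Proof. by rewrite /edge_on orbC. Qed.

Lemma edge_on_catl (T : finType) (u x y : T) p1 p2 :
  edge_on u p1 x y -> edge_on u (p1 ++ p2) x y.
Proof.
have zip_catl z : z \in zip (u :: p1) p1 -> z \in zip (u :: p1 ++ p2) (p1 ++ p2).
  by elim: p1 u => [|w p IH] u //=; rewrite !in_cons => /orP [->|/IH ->]; rewrite ?orbT.
by rewrite /edge_on => /orP [/zip_catl ->|/zip_catl ->]; rewrite ?orbT.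
Qed.

Lemma edge_on_catr (T : finType) (u x y : T) p1 p2 :
  edge_on (last u p1) p2 x y -> edge_on u (p1 ++ p2) x y.
Proof.
have zip_catr z : z \in zip (last u p1 :: p2) p2 -> z \in zip (u :: p1 ++ p2) (p1 ++ p2).
  by elim: p1 u => [|w p IH] u //= /IH; rewrite in_cons => ->; rewrite orbT.
by rewrite /edge_on => /orP [/zip_catr ->|/zip_catr ->]; rewrite ?orbT.
Qed.

Lemma edge_on_cons (T : finType) (u w x y : T) p :
  edge_on w p x y -> edge_on u (w :: p) x y.
Proof. by rewrite /edge_on /= !in_cons => /orP [] ->; rewrite !orbT. Qed.

Section Grid.
Variables n0 m0 : nat.
Local Notation n := n0.+1.
Local Notation m := m0.+1.
Local Notation vertex := ('I_n * 'I_m)%type.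
Local Notation e := (cart_prod (path_graph n) (complete_graph m)).

Lemma grid_edgeE (x y : vertex) : e x y = ((x.1 == y.1) && (x.2 != y.2)) ||
   ((x.2 == y.2) && ((x.1.+1 == y.1 :> nat) || (y.1.+1 == x.1 :> nat))).
Proof. by []. Qed.

Lemma grid_edgeC x y : e x y = e y x.
Proof.
rewrite !grid_edgeE; congr orb; first by rewrite eq_sym [y.2 == _]eq_sym.
by rewrite eq_sym orbC.
Qed.

Definition grid_dist (x y : vertex) : nat := distn x.1 y.1 + (x.2 != y.2).

Lemma grid_dist_triangle x y z : grid_dist x z <= grid_dist x y + grid_dist y z.
Proof.
rewrite /grid_dist /distn; move: (x.2) (y.2) (z.2) => a b c.
by case: (eqVneq a b) => [<-|_]; case: (eqVneq a c) => _ /=; lia.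
Qed.

Lemma grid_dist_edge x y : e x y -> grid_dist x y <= 1.
Proof.
rewrite grid_edgeE /grid_dist /distn => /orP [/andP [/eqP -> _]|/andP [/eqP -> h]].
  by rewrite subnn; case: (_ != _).
by rewrite eqxx /=; move: h => /orP [/eqP <-|/eqP <-]; lia.
Qed.

Lemma grid_dist_le_walk (u : vertex) p : path e u p -> grid_dist u (last u p) <= size p.
Proof.
elim: p u => [|w p IH] u /=; first by rewrite /grid_dist /distn subnn eqxx.
move=> /andP [uw /IH w_le]; apply: leq_trans (grid_dist_triangle u w _) _.
by rewrite -[(size p).+1]add1n; apply: leq_add (grid_dist_edge uw) w_le.
Qed.

Definition in_row (z : vertex * vertex) : bool := z.1.1 == z.2.1.

Lemma distn_add_count_in_row (u : vertex) p : path e u p ->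
  distn u.1 (last u p).1 + count in_row (zip (u :: p) p) <= size p.
Proof.
elim: p u => [|w p IH] u /=; first by rewrite /distn subnn.
move=> /andP [uw /IH w_le]; rewrite /in_row /distn /= in w_le *; move: uw; rewrite grid_edgeE.
move=> /orP [/andP [/eqP uw _]|/andP [_ /orP [/eqP uw|/eqP uw]]].
  by rewrite uw eqxx /=; lia.
all: have -> : (u.1 == w.1) = false by apply/eqP => /(congr1 val) /=; lia.
all: lia.
Qed.

Definition vtx (i a : nat) : vertex := (inord i, inord a).

Lemma vtxK (x : vertex) : vtx x.1 x.2 = x.
Proof. by case: x => i a; rewrite /vtx /= !inord_val. Qed.

Lemma vtx1 i a : i < n -> (vtx i a).1 = i :> nat.
Proof. by move=> i_lt; rewrite /= inordK. Qed.

Lemma vtx2 i a : a < m -> (vtx i a).2 = a :> nat.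
Proof. by move=> a_lt; rewrite /= inordK. Qed.

Lemma vtx_inj i a j b : i < n -> j < n -> a < m -> b < m ->
  vtx i a = vtx j b -> i = j /\ a = b.
Proof.
move=> i_lt j_lt a_lt b_lt eq_v; split.
  by rewrite -(vtx1 a i_lt) -(vtx1 b j_lt) eq_v.
by rewrite -(vtx2 i a_lt) -(vtx2 j b_lt) eq_v.
Qed.

Lemma grid_edge_layer i a : i.+1 < n -> a < m -> e (vtx i a) (vtx i.+1 a).
Proof.
move=> i_lt a_lt; rewrite grid_edgeE; apply/orP; right; rewrite eqxx /=.
by rewrite !inordK // ?eqxx // ltnW.
Qed.

Lemma grid_edge_row t a b : t < n -> a < m -> b < m -> a != b -> e (vtx t a) (vtx t b).
Proof.
move=> t_lt a_lt b_lt ab; rewrite grid_edgeE; apply/orP; left; rewrite eqxx /=.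
by apply/eqP => /(congr1 val); rewrite /= !inordK //; apply/eqP.
Qed.

Fixpoint walk_up (a i d : nat) : seq vertex :=
  if d is d'.+1 then vtx i.+1 a :: walk_up a i.+1 d' else [::].

Fixpoint walk_down (a i d : nat) : seq vertex :=
  if d is d'.+1 then vtx i.-1 a :: walk_down a i.-1 d' else [::].

Lemma walk_upP a i d : a < m -> i + d < n ->
  [/\ path e (vtx i a) (walk_up a i d), last (vtx i a) (walk_up a i d) = vtx (i + d) a,
      size (walk_up a i d) = d &
      forall l, i <= l < i + d ->
        (vtx l a, vtx l.+1 a) \in zip (vtx i a :: walk_up a i d) (walk_up a i d)].
Proof.
move=> a_lt; elim: d i => [|d IH] i id_lt /=.
  by rewrite addn0; split=> // l; lia.
have [IH1 IH2 IH3 IH4] := IH i.+1 ltac:(lia).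
split; [by rewrite IH1 grid_edge_layer //; lia | by rewrite IH2 addSnnS | by rewrite IH3 |].
move=> l l_in; rewrite in_cons; case: (eqVneq l i) => [->|li]; first by rewrite eqxx.
by rewrite IH4 ?orbT //; move/eqP: li; lia.
Qed.

Lemma walk_downP a i d : a < m -> i < n -> d <= i ->
  [/\ path e (vtx i a) (walk_down a i d), last (vtx i a) (walk_down a i d) = vtx (i - d) a,
      size (walk_down a i d) = d &
      forall l, i - d <= l < i ->
        (vtx l.+1 a, vtx l a) \in zip (vtx i a :: walk_down a i d) (walk_down a i d)].
Proof.
move=> a_lt; elim: d i => [|d IH] i i_lt d_le /=.
  by rewrite subn0; split=> // l; lia.
have [IH1 IH2 IH3 IH4] := IH i.-1 ltac:(lia) ltac:(lia).
have i_succ : i = i.-1.+1 by lia.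
split; [|by rewrite IH2; congr vtx; lia | by rewrite IH3 |].
  have := @grid_edge_layer i.-1 a ltac:(lia) a_lt.
  by rewrite -i_succ grid_edgeC IH1 => ->.
move=> l l_in; rewrite in_cons; case: (eqVneq l i.-1) => [->|li].
  by rewrite -i_succ eqxx.
by rewrite IH4 ?orbT //; move/eqP: li; lia.
Qed.

Definition layer_walk (a i j : nat) : seq vertex :=
  if i <= j then walk_up a i (j - i) else walk_down a i (i - j).

Lemma layer_walkP a i j : a < m -> i < n -> j < n ->
  [/\ path e (vtx i a) (layer_walk a i j), last (vtx i a) (layer_walk a i j) = vtx j a,
      size (layer_walk a i j) = distn i j &
      forall l, minn i j <= l < maxn i j ->
        edge_on (vtx i a) (layer_walk a i j) (vtx l a) (vtx l.+1 a)].
Proof.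
move=> a_lt i_lt j_lt; rewrite /layer_walk /edge_on /distn; case: ifP => ij.
  have [W1 W2 W3 W4] := walk_upP a_lt (ltac:(lia) : i + (j - i) < n).
  split=> //; [by rewrite W2; congr vtx; lia | by rewrite W3; lia |].
  by move=> l l_in; rewrite W4 //; lia.
have [W1 W2 W3 W4] := walk_downP a_lt i_lt (leq_subr j i).
split=> //; [by rewrite W2; congr vtx; lia | by rewrite W3; lia |].
by move=> l l_in; rewrite W4 ?orbT //; lia.
Qed.

Definition cross_walk (u v : vertex) (t : nat) : seq vertex :=
  if u.2 == v.2 then layer_walk v.2 u.1 v.1
  else layer_walk u.2 u.1 t ++ vtx t v.2 :: layer_walk v.2 t v.1.

Lemma cross_walkP (u v : vertex) t : between t u.1 v.1 ->
  [/\ path e u (cross_walk u v t), last u (cross_walk u v t) = v &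
      size (cross_walk u v t) = grid_dist u v].
Proof.
move=> btw; have u1 := ltn_ord u.1; have u2 := ltn_ord u.2.
have v1 := ltn_ord v.1; have v2 := ltn_ord v.2.
rewrite /cross_walk /grid_dist /between in btw *.
rewrite -[u in path e u _]vtxK -[u in last u _]vtxK; case: eqVneq => [uv|uv] /=.
  have [W1 W2 W3 _] := layer_walkP v2 u1 v1.
  by rewrite uv W1 W2 W3 vtxK addn0.
have t_lt : t < n by lia.
have [W1 W2 W3 _] := layer_walkP u2 u1 t_lt; have [W1' W2' W3' _] := layer_walkP v2 t_lt v1.
rewrite cat_path last_cat /= W1 W2 W1' W2' vtxK size_cat /= W3 W3' grid_edge_row //=.
by split=> //; rewrite /distn; lia.
Qed.

Lemma shortest_cross_walk (u v : vertex) t : between t u.1 v.1 ->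
  is_shortest_path e u v (cross_walk u v t).
Proof.
move=> btw; have [W1 W2 W3] := cross_walkP btw; split=> // q [q_path q_last].
by rewrite W3 -q_last; apply: grid_dist_le_walk.
Qed.

Lemma cross_walk_layer (u v : vertex) t l : u.2 = v.2 ->
  minn u.1 v.1 <= l < maxn u.1 v.1 ->
  edge_on u (cross_walk u v t) (vtx l u.2) (vtx l.+1 u.2).
Proof.
move=> uv l_in; rewrite /cross_walk uv eqxx -{1}[u]vtxK uv.
by have [_ _ _ ->] := layer_walkP (ltn_ord v.2) (ltn_ord u.1) (ltn_ord v.1).
Qed.

Section CrossWalkEdges.
Variables (u v : vertex) (t : nat).
Hypotheses (uv : u.2 != v.2) (btw : between t u.1 v.1).

Let t_lt : t < n.
Proof. by move: btw (ltn_ord u.1) (ltn_ord v.1); rewrite /between; lia. Qed.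

Lemma cross_walk_row : edge_on u (cross_walk u v t) (vtx t u.2) (vtx t v.2).
Proof.
rewrite /cross_walk (negbTE uv); apply: edge_on_catr.
have [_ W2 _ _] := layer_walkP (ltn_ord u.2) (ltn_ord u.1) t_lt.
by rewrite -{1}[u]vtxK W2 /edge_on /= in_cons eqxx.
Qed.

Lemma cross_walk_first l : minn u.1 t <= l < maxn u.1 t ->
  edge_on u (cross_walk u v t) (vtx l u.2) (vtx l.+1 u.2).
Proof.
move=> l_in; rewrite /cross_walk (negbTE uv) -{1}[u]vtxK; apply: edge_on_catl.
by have [_ _ _ ->] := layer_walkP (ltn_ord u.2) (ltn_ord u.1) t_lt.
Qed.

Lemma cross_walk_second l : minn t v.1 <= l < maxn t v.1 ->
  edge_on u (cross_walk u v t) (vtx l v.2) (vtx l.+1 v.2).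
Proof.
move=> l_in; rewrite /cross_walk (negbTE uv); apply/edge_on_catr/edge_on_cons.
by have [_ _ _ ->] := layer_walkP (ltn_ord v.2) t_lt (ltn_ord v.1).
Qed.

End CrossWalkEdges.

Lemma shortest_size (u v : vertex) p : is_shortest_path e u v p -> size p = grid_dist u v.
Proof.
move=> [[p_path p_last] p_min]; apply/eqP; rewrite eqn_leq; apply/andP; split.
  have btw : between u.1 u.1 v.1 by rewrite /between; lia.
  by have [W1 W2 <-] := cross_walkP btw; apply: p_min.
by rewrite -p_last; apply: grid_dist_le_walk.
Qed.

(* A row edge on a geodesic is its only change of layer, so it joins the layers
   of the two endpoints. *)
Lemma shortest_in_row_layers (u v x y : vertex) p : is_shortest_path e u v p ->
  (x, y) \in zip (u :: p) p -> x.1 = y.1 -> x.2 != y.2 -> u.2 = x.2 /\ v.2 = y.2.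
Proof.
move=> sh xy_in xy1 xy2; have p_size := shortest_size sh.
case: sh => [[p_path p_last] _]; have [p1 [p2 [p_def p1_last]]] := mem_zip_split xy_in.
rewrite p_def cat_path last_cat p1_last /= in p_path p_last.
case/and3P: p_path => [p1_path _ p2_path].
have ux := grid_dist_le_walk p1_path; rewrite p1_last in ux.
have yv := grid_dist_le_walk p2_path; rewrite p_last in yv.
rewrite p_def size_cat /= in p_size; move: ux yv p_size.
rewrite /grid_dist /distn xy1; move: (u.2) (x.2) (y.2) (v.2) xy2 => a b c d.
by case: (eqVneq a b) => [->|_]; case: (eqVneq c d) => [->|_] //=; lia.
Qed.

Lemma shortest_in_row_uniq (u v : vertex) p z1 z2 : is_shortest_path e u v p ->
  z1 \in zip (u :: p) p -> z2 \in zip (u :: p) p -> in_row z1 -> in_row z2 -> z1 = z2.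
Proof.
move=> sh z1_in z2_in z1_row z2_row; have p_size := shortest_size sh.
case: sh => [[p_path p_last] _]; have := distn_add_count_in_row p_path.
rewrite p_last p_size /grid_dist; case: (eqVneq z1 z2) => // z12.
by have := count_ge2 z1_in z2_in z12 z1_row z2_row; case: (u.2 != v.2) => /=; lia.
Qed.

Definition layer (S : {set vertex}) (a : 'I_m) := [set x in S | x.2 == a].

Lemma card_layers (S : {set vertex}) : #|S| = \sum_(a < m) #|layer S a|.
Proof.
rewrite -sum1_card (partition_big (fun x : vertex => x.2) xpredT) //=.
by apply: eq_bigr => a _; rewrite sum1dep_card.
Qed.

Section LayerPairs.
Variables (S : {set vertex}) (f : vertex -> vertex -> option (seq vertex)).
Hypothesis f_short : forall u v p, u \in S -> v \in S -> enum_rank u < enum_rank v ->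
  f u v = Some p -> is_shortest_path e u v p.
Hypothesis f_cover : forall x y, e x y -> exists u v p,
  [/\ u \in S, v \in S, enum_rank u < enum_rank v, f u v = Some p & edge_on u p x y].
Variables a b : 'I_m.
Hypothesis ab : a != b.

Let ba : b != a. Proof. by rewrite eq_sym. Qed.

Definition covers (t : 'I_n) (q : vertex * vertex) : bool :=
  [&& q.1 \in S, q.2 \in S, enum_rank q.1 < enum_rank q.2 &
      if f q.1 q.2 is Some p then edge_on q.1 p (t, a) (t, b) else false].

Definition cover_pair (t : 'I_n) : vertex * vertex :=
  odflt ((t, a), (t, b)) [pick q | covers t q].

Lemma cover_pairP t : covers t (cover_pair t).
Proof.
rewrite /cover_pair; case: pickP => [q //|no_cover].
have [|u [v [p [u_in v_in uv f_uv cov]]]] := f_cover (x := (t, a)) (y := (t, b)).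
  by rewrite grid_edgeE eqxx ab.
by move: (no_cover (u, v)); rewrite /covers /= u_in v_in uv f_uv cov.
Qed.

Lemma covers_layers t q : covers t q ->
  ((q.1.2 == a) && (q.2.2 == b)) || ((q.1.2 == b) && (q.2.2 == a)).
Proof.
case/and4P=> u_in v_in uv; case f_uv: (f q.1 q.2) => [p|//].
have sh := f_short u_in v_in uv f_uv; rewrite /edge_on => /orP [z_in|z_in].
  by have [-> ->] := shortest_in_row_layers sh z_in erefl ab; rewrite !eqxx.
by have [-> ->] := shortest_in_row_layers sh z_in erefl ba; rewrite !eqxx orbT.
Qed.

Lemma covers_row_uniq t1 t2 q : covers t1 q -> covers t2 q -> t1 = t2.
Proof.
case/and4P=> u_in v_in uv; case f_uv: (f q.1 q.2) => [p|//] cov1 /and4P [_ _ _].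
rewrite f_uv => cov2; have sh := f_short u_in v_in uv f_uv.
move: cov1 cov2; rewrite /edge_on => /orP [z1|z1] /orP [z2|z2];
  by have := shortest_in_row_uniq sh z1 z2 (eqxx _) (eqxx _); case.
Qed.

Definition orient (q : vertex * vertex) := if q.1.2 == a then q else (q.2, q.1).

Lemma orient_cover_pair t : orient (cover_pair t) \in setX (layer S a) (layer S b).
Proof.
have := cover_pairP t; have := covers_layers (cover_pairP t).
case/and4P: (cover_pairP t) => u_in v_in _ _ /orP [] /andP [/eqP ea /eqP eb] _.
  by rewrite /orient ea eqxx !inE u_in v_in ea eb !eqxx.
by rewrite /orient ea (negbTE ba) !inE u_in v_in ea eb !eqxx.
Qed.

Lemma orient_cover_pair_inj : injective (orient \o cover_pair).
Proof.
move=> t1 t2 /= eq_or; apply: (covers_row_uniq (cover_pairP t1)).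
suff -> : cover_pair t1 = cover_pair t2 by exact: cover_pairP.
case/and4P: (cover_pairP t1) => _ _ r1 _; case/and4P: (cover_pairP t2) => _ _ r2 _.
move: eq_or r1 r2; rewrite /orient.
case: (cover_pair t1) (cover_pair t2) => [u1 v1] [u2 v2] /=.
by case: eqP => _; case: eqP => _ [-> ->] //; lia.
Qed.

Lemma layer_card_mul : n <= #|layer S a| * #|layer S b|.
Proof.
apply: (@leq_trans #|(orient \o cover_pair) @: [set: 'I_n]|).
  by rewrite card_imset ?cardsT ?card_ord //; exact: orient_cover_pair_inj.
rewrite -cardsX; apply/subset_leq_card/subsetP => _ /imsetP [t _ ->].
exact: orient_cover_pair.
Qed.

End LayerPairs.

Lemma sge_value_le_card (S : {set vertex}) k h : 3 <= m -> 0 < k -> h <= 2 * k ->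
  n = k ^ 2 + h -> strong_edge_geodetic e S -> sge_value m k h <= #|S|.
Proof.
move=> m_ge3 k_gt0 h_le n_def [f [f_short f_cover]].
pose size_of a := #|layer S a|.
have [c _ c_min] := @arg_minnP _ ord0 xpredT size_of isT.
have partner a : a != c -> partner_lb k h (size_of c) <= size_of a.
  move=> ac; apply: partner_lbP => //; first exact: c_min.
  by rewrite -n_def; apply: layer_card_mul f_short f_cover _ _ _; rewrite eq_sym.
apply: leq_trans (sge_value_le (size_of c) m_ge3 k_gt0 h_le) _.
rewrite card_layers (bigD1 c) //= leq_add2l.
have sum_le : \sum_(a | a != c) partner_lb k h (size_of c) <= \sum_(a | a != c) size_of a.
  exact: leq_sum.
apply: leq_trans sum_le.
by rewrite sum_nat_const cardC1 card_ord subn1 mulnC.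
Qed.

Section UpperBound.
Variable st : nat -> seq nat.
Variable route : nat -> nat -> nat -> nat * nat.
Hypothesis st_lt : forall a x, x \in st a -> x < n.
Hypothesis routeP : forall a b t, a < b < m -> t < n ->
  [/\ (route a b t).1 \in st a, (route a b t).2 \in st b &
      between t (route a b t).1 (route a b t).2].
Hypothesis route_inj : forall a b t1 t2, a < b < m -> t1 < n -> t2 < n ->
  route a b t1 = route a b t2 -> t1 = t2.
Hypothesis layer_edge_routed : forall a l, a < m -> l.+1 < n ->
  (exists x y, [/\ x \in st a, y \in st a & x <= l < y]) \/
  (exists b t, [/\ a < b < m, t < n & minn (route a b t).1 t <= l < maxn (route a b t).1 t]).

Definition route_set : {set vertex} := [set x : vertex | val x.1 \in st x.2].

Definition route_row_lt (u v : vertex) : 'I_n :=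
  odflt u.1 [pick t : 'I_n | (u.2 < v.2) && (route u.2 v.2 t == (val u.1, val v.1))].

Definition route_row (u v : vertex) : 'I_n :=
  if u.2 < v.2 then route_row_lt u v else route_row_lt v u.

Definition route_walk (u v : vertex) : seq vertex := cross_walk u v (route_row u v).

Lemma route_rowC u v : u.2 != v.2 -> route_row v u = route_row u v.
Proof.
move=> uv; rewrite /route_row; case: (ltngtP u.2 v.2) => // /val_inj eq_uv.
by rewrite eq_uv eqxx in uv.
Qed.

Lemma route_row_lt_between u v : between (route_row_lt u v) u.1 v.1.
Proof.
rewrite /route_row_lt.
case: pickP => [t /andP [uv /eqP r_t]|_] /=; last by rewrite /between; lia.
have uv_lt : u.2 < v.2 < m by rewrite uv /=.
by have [_ _] := routeP uv_lt (ltn_ord t); rewrite r_t.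
Qed.

Lemma shortest_route_walk u v : is_shortest_path e u v (route_walk u v).
Proof.
apply: shortest_cross_walk; rewrite /route_row; case: ifP => _.
  exact: route_row_lt_between.
by rewrite between_sym; apply: route_row_lt_between.
Qed.

Lemma route_rowE a b t : a < b < m -> t < n ->
  route_row (vtx (route a b t).1 a) (vtx (route a b t).2 b) = t :> nat.
Proof.
move=> abm t_lt; have [x_in y_in _] := routeP abm t_lt.
have [x_lt y_lt] := (st_lt x_in, st_lt y_in); case/andP: (abm) => ab b_lt.
rewrite /route_row /route_row_lt /= !inordK ?ab //; try lia.
case: pickP => [t' /andP [_ /eqP r_t']|no_row] /=.
  by rewrite -surjective_pairing in r_t'; apply: route_inj r_t'.
by move: (no_row (Ordinal t_lt)); rewrite /= -surjective_pairing eqxx.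
Qed.

Definition covered (x y : vertex) := exists u v p,
  [/\ u \in route_set, v \in route_set, enum_rank u < enum_rank v,
      Some (route_walk u v) = Some p & edge_on u p x y].

Lemma coveredC x y : covered x y -> covered y x.
Proof. by case=> u [v [p [? ? ? ? cov]]]; exists u, v, p; rewrite edge_onC. Qed.

Lemma covered_pair u v x y : u \in route_set -> v \in route_set -> u != v ->
  edge_on u (route_walk u v) x y -> edge_on v (route_walk v u) x y -> covered x y.
Proof.
move=> u_in v_in uv cov_uv cov_vu.
have : enum_rank u != enum_rank v by rewrite (inj_eq enum_rank_inj).
case: (ltngtP (enum_rank u) (enum_rank v)) => [uv_lt|vu_lt|/val_inj ->] rank_neq.
- by exists u, v, (route_walk u v).
- by exists v, u, (route_walk v u).
by rewrite eqxx in rank_neq.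
Qed.

Lemma vtx_in_route_set x a : x < n -> a < m -> (vtx x a \in route_set) = (x \in st a).
Proof. by move=> x_lt a_lt; rewrite inE /= !inordK. Qed.

Section RoutedPair.
Variables a b t : nat.
Hypotheses (ab : a < b < m) (t_lt : t < n).
Let x := (route a b t).1.
Let y := (route a b t).2.
Let u := vtx x a.
Let v := vtx y b.

Let x_in : x \in st a. Proof. by case: (routeP ab t_lt). Qed.
Let y_in : y \in st b. Proof. by case: (routeP ab t_lt). Qed.
Let x_lt : x < n. Proof. exact: st_lt x_in. Qed.
Let y_lt : y < n. Proof. exact: st_lt y_in. Qed.
Let a_lt : a < m. Proof. by case/andP: ab => ab' b_lt; apply: ltn_trans ab' b_lt. Qed.
Let b_lt : b < m. Proof. by case/andP: ab. Qed.

Let uv2 : u.2 != v.2.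
Proof. by rewrite /u /v; apply/eqP => /(congr1 val); rewrite /= !inordK //; lia. Qed.

Let btw : between t u.1 v.1.
Proof. by rewrite /u /v /= !inordK //; case: (routeP ab t_lt). Qed.

Let vu2 : v.2 != u.2. Proof. by rewrite eq_sym. Qed.

Let btw' : between t v.1 u.1. Proof. by rewrite between_sym. Qed.

Let u_in : u \in route_set. Proof. by rewrite vtx_in_route_set. Qed.
Let v_in : v \in route_set. Proof. by rewrite vtx_in_route_set. Qed.

Let walk_uv : route_walk u v = cross_walk u v t.
Proof. by rewrite /route_walk; congr cross_walk; exact: route_rowE. Qed.

Let walk_vu : route_walk v u = cross_walk v u t.
Proof. by rewrite /route_walk route_rowC //; congr cross_walk; exact: route_rowE. Qed.

Lemma covered_route_row : covered (vtx t a) (vtx t b).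
Proof.
apply: (covered_pair u_in v_in); first by apply: contra uv2 => /eqP ->.
  by have := cross_walk_row uv2 btw; rewrite walk_uv /u /v /= !inordK.
by rewrite walk_vu edge_onC; have := cross_walk_row vu2 btw'; rewrite /u /v /= !inordK.
Qed.

Lemma covered_route_layer l : minn x t <= l < maxn x t -> covered (vtx l a) (vtx l.+1 a).
Proof.
move=> l_in; apply: (covered_pair u_in v_in); first by apply: contra uv2 => /eqP ->.
  by have := cross_walk_first uv2 btw; rewrite walk_uv /u /v /= !inordK //; apply.
rewrite walk_vu; have := cross_walk_second vu2 btw'; rewrite /u /v /= !inordK //.
by apply; rewrite minnC maxnC.
Qed.

End RoutedPair.

Lemma covered_layer a l : a < m -> l.+1 < n -> covered (vtx l a) (vtx l.+1 a).
Proof.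
move=> a_lt l_lt; case: (layer_edge_routed a_lt l_lt) => [[x [y [x_in y_in l_in]]]|].
  have [x_lt y_lt] := (st_lt x_in, st_lt y_in).
  apply: (@covered_pair (vtx x a) (vtx y a)); rewrite ?vtx_in_route_set //.
  - by apply/eqP => /vtx_inj [] // xy _; rewrite xy in l_in; lia.
  - by have := @cross_walk_layer (vtx x a) (vtx y a) (route_row (vtx x a) (vtx y a)) l;
      rewrite /= !inordK //; apply=> //; lia.
  - by have := @cross_walk_layer (vtx y a) (vtx x a) (route_row (vtx y a) (vtx x a)) l;
      rewrite /= !inordK //; apply=> //; lia.
by case=> b [t [ab t_lt l_in]]; apply: covered_route_layer l_in.
Qed.

Lemma covered_row (t : 'I_n) (a b : 'I_m) : a != b -> covered (t, a) (t, b).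
Proof.
rewrite -[(t, a)]vtxK -[(t, b)]vtxK /=.
case: (ltngtP a b) => [ab|ba|/val_inj ->] neq_ab; last by rewrite eqxx in neq_ab.
  by apply: covered_route_row; rewrite ?ab ?ltn_ord.
by apply/coveredC/covered_route_row; rewrite ?ba ?ltn_ord.
Qed.

Theorem route_set_geodetic : strong_edge_geodetic e route_set.
Proof.
exists (fun u v => Some (route_walk u v)); split.
  by move=> u v p _ _ _ [<-]; apply: shortest_route_walk.
move=> [i a] [j b] ij_edge; change (covered (i, a) (j, b)); move: ij_edge.
rewrite grid_edgeE /=.
case/orP=> [/andP [/eqP <-]|/andP [/eqP <- /orP [] /eqP ij]]; first exact: covered_row.
  by rewrite -[(i, a)]vtxK -[(j, a)]vtxK /= -ij; apply: covered_layer; rewrite ?ij.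
apply: coveredC; rewrite -[(i, a)]vtxK -[(j, a)]vtxK /= -ij.
by apply: covered_layer; rewrite ?ij.
Qed.

Lemma card_ord_mem (s : seq nat) : uniq s -> {subset s <= gtn n} ->
  #|[set i : 'I_n | val i \in s]| = size s.
Proof.
move=> s_uniq s_lt; rewrite cardE -(size_map val); apply/perm_size/uniq_perm => //.
  by rewrite map_inj_uniq ?enum_uniq //; exact: val_inj.
move=> x; apply/mapP/idP => [[i]|x_in]; first by rewrite mem_enum inE => i_in ->.
by exists (Ordinal (s_lt x x_in)); rewrite // mem_enum inE.
Qed.

Lemma card_route_set : (forall a, uniq (st a)) -> #|route_set| = \sum_(a < m) size (st a).
Proof.
move=> st_uniq; rewrite card_layers; apply: eq_bigr => a _.
have -> : layer route_set a = (fun i : 'I_n => (i, a)) @: [set i : 'I_n | val i \in st a].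
  apply/setP => -[i b]; rewrite !inE /=.
  apply/andP/imsetP => [[i_in /eqP b_a]|[j j_in [-> ->]]].
    by exists i; rewrite ?inE -?b_a.
  by rewrite inE in j_in.
by rewrite card_imset ?card_ord_mem // => [x /st_lt|i j []].
Qed.

End UpperBound.

Lemma stations_geodetic s d : stations s d n ->
  exists S : {set vertex}, strong_edge_geodetic e S /\ #|S| = m * s.
Proof.
move=> st_ok; have st_lt : forall a x : nat, x \in station_seq s d n -> x < n.
  by move=> _ x; apply: station_seqP.
exists (route_set (fun _ => station_seq s d n)); split.
  apply: (@route_set_geodetic _ (fun _ _ => cross s d n)) => //.
  - by move=> a b t _ t_lt; apply: crossP.
  - by move=> a b t1 t2 _; apply: cross_inj.
  move=> a l _ l_lt; left; exists (station s d n 0), (station s d n s.-1).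
  have s_gt0 := stations_s_gt0 st_ok.
  split; try apply: mem_station_seq; rewrite ?station0 ?station_last //; lia.
rewrite card_route_set // => [|_]; last exact: station_seq_uniq.
by rewrite (eq_bigr (fun _ => s)) ?sum_nat_const ?card_ord // => a _; rewrite size_station_seq.
Qed.

Lemma mixed_geodetic k : 0 < k -> k ^ 2 < n <= k ^ 2 + k -> 0 < m0 ->
  exists S : {set vertex}, strong_edge_geodetic e S /\ #|S| = m * k + (m - 1).
Proof.
move=> k_gt0 n_bd m0_gt0; have st_sq := stations_square k_gt0; have st_lo := stations_low n_bd.
pose st (a : nat) := if a == 0 then station_seq k k.+1 (k ^ 2) else station_seq k.+1 k.+1 n.
pose route (a b t : nat) := if a == 0 then mixed_route k n t else cross k.+1 k.+1 n t.
have st_lt a x : x \in st a -> x < n.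
  by rewrite /st; case: eqP => _ /station_seqP => [/(_ st_sq)|/(_ st_lo)]; lia.
exists (route_set st); split.
  apply: (@route_set_geodetic _ route) => //.
  - move=> a b t /andP [ab _] t_lt; rewrite /st /route (_ : (b == 0) = false); last by lia.
    by case: eqP => _; [apply: mixed_routeP | apply: crossP].
  - move=> a b t1 t2 _; rewrite /route.
    by case: eqP => _; [apply: mixed_route_inj | apply: cross_inj].
  move=> a l a_lt l_lt; rewrite /st /route; case: eqP => [->|_].
    case: (ltnP l.+1 (k ^ 2)) => l_sq.
      left; exists (station k k.+1 (k ^ 2) 0), (station k k.+1 (k ^ 2) k.-1).
      split; try apply: mem_station_seq; rewrite ?station0 ?station_last //; lia.
    right; exists 1, n0; rewrite /= /mixed_route (_ : (n0 < k ^ 2) = false) /=; last by lia.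
    have : (n0 - k ^ 2) * k.+1 <= k.-1 * k.+1 by rewrite leq_mul2r; lia.
    by split; lia.
  left; exists (station k.+1 k.+1 n 0), (station k.+1 k.+1 n k).
  split; try apply: mem_station_seq; rewrite ?station0 ?(station_last k.+1 k.+1 n) //; lia.
have st_uniq a : uniq (st a) by rewrite /st; case: ifP => _; apply: station_seq_uniq.
rewrite card_route_set //.
have size_st a : size (st a) = if a == 0 then k else k.+1.
  by rewrite /st; case: ifP; rewrite size_station_seq.
rewrite big_ord_recl (eq_bigr (fun _ => k.+1)) => [|a _]; last by rewrite size_st.
by rewrite size_st sum_nat_const card_ord /=; lia.
Qed.

Lemma sge_value_geodetic k h : 1 < m -> 0 < k -> h <= 2 * k -> n = k ^ 2 + h ->
  exists S : {set vertex}, strong_edge_geodetic e S /\ #|S| = sge_value m k h.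
Proof.
move=> m_gt1 k_gt0 h_le n_def; rewrite /sge_value.
case: (posnP h) => [h0|h_gt0].
  have st_sq : stations k k.+1 n by rewrite n_def h0 addn0; apply: stations_square.
  exact: stations_geodetic st_sq.
case: (leqP h k) => h_k; first by apply: mixed_geodetic; lia.
have st_hi : stations k.+1 k.+2 n by apply: stations_high; lia.
have [S [S_geo S_card]] := stations_geodetic st_hi.
by exists S; rewrite S_card mulnS addnC.
Qed.

Theorem sge_number_grid k h : 3 <= m -> 0 < k -> h <= 2 * k -> n = k ^ 2 + h ->
  sge_number e (sge_value m k h).
Proof.
move=> m_ge3 k_gt0 h_le n_def; split; first by apply: sge_value_geodetic; lia.
by move=> S; apply: sge_value_le_card.
Qed.

End Grid.

Theorem mainTheorem12 :
  (forall m n k : nat, 3 <= m -> 2 <= n -> 1 <= k ->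
     k ^ 2 <= n -> n < k.+1 ^ 2 ->
     let h := n - k ^ 2 in
     [/\ h = 0 ->
           sge_number (cart_prod (path_graph n) (complete_graph m)) (m * k),
         1 <= h <= k ->
           sge_number (cart_prod (path_graph n) (complete_graph m))
             (m * k + (m - 1))
       & k.+1 <= h <= 2 * k ->
           sge_number (cart_prod (path_graph n) (complete_graph m))
             (m * k + m)]) /\
  (forall m : nat, 3 <= m ->
     sge_number (cart_prod (path_graph 2) (complete_graph m)) (2 * m - 1)).
Proof.
have sge_grid m n k : 3 <= m -> 0 < n -> 0 < k -> k ^ 2 <= n < k.+1 ^ 2 ->
    sge_number (cart_prod (path_graph n) (complete_graph m)) (sge_value m k (n - k ^ 2)).
  case: m n => [//|m0] [//|n0] m_ge3 _ k_gt0 n_bd.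
  by apply: sge_number_grid => //; move: n_bd; rewrite -!mulnn; nia.
split=> [m n k m_ge3 n_ge2 k_gt0 lo hi h|m m_ge3].
  have := sge_grid m n k m_ge3 (ltnW n_ge2) k_gt0 (introT andP (conj lo hi)).
  rewrite -/h /sge_value; clearbody h => sge.
  split=> [h0|/andP [h_gt0 h_le]|/andP [k_lt _]]; first by rewrite h0 in sge.
    by rewrite gtn_eqF // h_le in sge.
  by rewrite gtn_eqF ?(leqNgt h k) ?k_lt // in sge; lia.
have := sge_grid m 2 1 m_ge3 isT isT isT.
by rewrite /sge_value /= (_ : m * 1 + (m - 1) = 2 * m - 1) //; lia.
Qed.
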